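(* Let $\alpha=(\alpha_1,\ldots,\alpha_n)$ be a composition, $\sigma\in S_n$, and $i\in\{1,\ldots,n-1\}$ with $\alpha_i=\alpha_{i+1}$. Let $T\in\mathrm{NAF}(\alpha,\sigma)$ and $U\in\mathrm{F}(\alpha,\sigma s_i)$. If $P_i(T,U)\ne0$, then $U$ is non-attacking, i.e. $U\in\mathrm{NAF}(\alpha,\sigma s_i)$.
   Context: Permutations are in one-line notation; $\sigma s_i$ is $\sigma$ with the entries in positions $i,i+1$ exchanged. A composition is a sequence of nonnegative integers. The skyline diagram is $\mathrm{dg}(\alpha)=\{(j,r):1\le j\le n,\ 1\le r\le\alpha_j\}$ ($j$ = column, $r$ = row) and the augmented diagram is $\mathrm{adg}(\alpha)=\mathrm{dg}(\alpha)\cup\{(j,0):1\le j\le n\}$ (row $0$ is the basement). For $u=(j,r)\in\mathrm{dg}(\alpha)$: $\mathrm{leg}(u)=\alpha_j-r$; the left arm set is $\{(j',r-1)\in\mathrm{adg}(\alpha):j'<j,\ \alpha_{j'}<\alpha_j\}$, the right arm set is $\{(j',r)\in\mathrm{dg}(\alpha):j'>j,\ \alpha_{j'}\le\alpha_j\}$, $\mathrm{Arm}(u)$ is their union and $\mathrm{arm}(u)=|\mathrm{Arm}(u)|$. Two boxes of $\mathrm{adg}(\alpha)$ attack each other if they are in the same row, or in consecutive rows with the box in the higher row strictly to the right of the box in the lower row. A filling of shape $\alpha$ and basement $\tau\in S_n$ is a map $T:\mathrm{adg}(\alpha)\to\{1,\ldots,n\}$ with $T(j,0)=\tau_j$; $\mathrm{F}(\alpha,\tau)$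 is the set of these, and $\mathrm{NAF}(\alpha,\tau)$ the subset of non-attacking ones (attacking boxes have distinct entries). For integers $a,b$ let $\chi(a,b)=1$ if $a>b$ and $0$ otherwise, and $\chi(a,b,c)=\chi(a,b)+\chi(b,c)-\chi(a,c)$. Fix $i$ with $\alpha_i=\alpha_{i+1}$. For a filling $T$ and $0\le r\le\alpha_i$, $\mathrm{swap}_r(T)$ exchanges the entries of boxes $(i,r)$ and $(i+1,r)$, and $\Omega_{0,h}=\mathrm{swap}_h\circ\cdots\circ\mathrm{swap}_0$. For $T\in\mathrm{NAF}(\alpha,\tau)$ and $0\le r\le\alpha_i-1$, let $a=T(i,r)$, $b=T(i+1,r)$, $c=T(i,r+1)$, $d=T(i+1,r+1)$, $A=\mathrm{arm}(i+1,r+1)$, $\ell=\mathrm{leg}(i+1,r+1)$, and define $\rho_r(T)\in\mathbb{Q}(q,t)$: if $a,b,c,d$ are distinct, $\rho_r(T)=0$ when $\chi(c,d,a)=\chi(c,d,b)$ and $\rho_r(T)=1$ when $\chi(c,d,a)=\chi(d,c,b)$; if exactly three of them are distinct, then $\rho_r(T)=0$ if $b=c$, $\rho_r(T)=1$ if $b=d$, and $\rho_r(T)=t^{1-\chi(d,a,b)}\frac{1-q^{\ell+1}t^{A+1}}{1-q^{\ell+1}t^{A+2}}$ if $a=c$; if $a=c$ and $b=d$, $\rho_r(T)=1$. Also set $\rho_{\alpha_i}(T)=0$. For $T\in\mathrm{NAF}(\alpha,\tau)$ and $U\in\mathrm{F}(\alpha,\tau s_i)$, $P_i(T,U)=\left(\prod_{r=0}^{h-1}\rho_r(T)\right)(1-\rho_h(T))$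 if $U=\Omega_{0,h}(T)$ for some $h\in\{0,\ldots,\alpha_i\}$, and $P_i(T,U)=0$ otherwise. *)

From HB Require Import structures.
From mathcomp Require Import all_boot all_order all_algebra all_fingroup fraction.
Set Implicit Arguments. Unset Strict Implicit. Unset Printing Implicit Defensive.
Import Order.TTheory GRing.Theory Num.Theory.
Local Open Scope ring_scope.

(* Conventions: columns are 0-based, [j : 'I_n] stands for the paper's column
   j+1; rows are nat, row 0 is the basement; entries are in 'I_n, i.e. the
   paper's values 1..n shifted down by one (an order isomorphism). *)

(* The field Q(q,t) = Frac(Q[t][q]). *)
Definition QqtRing := {poly {poly rat}}.
Definition Qqt := {fraction QqtRing}.
Definition qv : Qqt := @FracField.tofrac QqtRing (('X : {poly rat})%:P).
Definition tv : Qqt := @FracField.tofrac QqtRing 'X.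

Section Defs.
Variable n : nat.
Variable alpha : 'I_n -> nat.

(* A filling: column -> row -> entry; only values on adg(alpha) matter. *)
Definition filling := 'I_n -> nat -> 'I_n.

Definition in_adg (j : 'I_n) (r : nat) : bool := (r <= alpha j)%N.

Definition is_filling (tau : 'S_n) (T : filling) : Prop :=
  forall j : 'I_n, T j 0%N = tau j.

Definition attack (j : 'I_n) (r : nat) (j' : 'I_n) (r' : nat) : bool :=
  [|| r == r',
      (r' == r.+1) && (j < j')%N
    | (r == r'.+1) && (j' < j)%N].

Definition NAF (tau : 'S_n) (T : filling) : Prop :=
  is_filling tau T /\
  forall (j : 'I_n) (r : nat) (j' : 'I_n) (r' : nat),
    in_adg j r -> in_adg j' r' -> (j, r) <> (j', r') ->
    attack j r j' r' -> T j r <> T j' r'.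

Definition leg (j : 'I_n) (r : nat) : nat := (alpha j - r)%N.

Definition left_arm (j : 'I_n) (r : nat) : {set 'I_n} :=
  [set j' : 'I_n | [&& (j' < j)%N, (alpha j' < alpha j)%N & (r.-1 <= alpha j')%N]].
Definition right_arm (j : 'I_n) (r : nat) : {set 'I_n} :=
  [set j' : 'I_n | [&& (j < j')%N, (alpha j' <= alpha j)%N & (1 <= r <= alpha j')%N]].
(* the left and right arm sets lie in rows r-1 and r respectively, hence are
   disjoint, so arm(u) = |left| + |right| *)
Definition arm (j : 'I_n) (r : nat) : nat := (#|left_arm j r| + #|right_arm j r|)%N.

Definition chi (a b : 'I_n) : int := ((b < a)%N : nat)%:Z.
Definition chi3 (a b c : 'I_n) : int := chi a b + chi b c - chi a c.

(* fix the column i (0-based); ordS i is column i+1 when i+1 < n *)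
Variable i : 'I_n.
Definition i1 : 'I_n := ordS i.

(* one-line sigma s_i : j |-> sigma (s_i j) *)
Definition sigma_si (sigma : 'S_n) : 'S_n := (tperm i i1 * sigma)%g.

Definition Omega (h : nat) (T : filling) : filling :=
  fun j r => if (r <= h)%N then
               (if j == i then T i1 r else if j == i1 then T i r else T j r)
             else T j r.

Definition rho (T : filling) (r : nat) : Qqt :=
  if (alpha i <= r)%N then 0 else
  let a := T i r in let b := T i1 r in
  let c := T i r.+1 in let d := T i1 r.+1 in
  let A := arm i1 r.+1 in let l := leg i1 r.+1 in
  if uniq [:: a; b; c; d] then
    (if chi3 c d a == chi3 c d b then 0
     else if chi3 c d a == chi3 d c b then 1 else 0)
  else if size (undup [:: a; b; c; d]) == 3%N then
    (if b == c then 0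
     else if b == d then 1
     else if a == c then
       tv ^ (1 - chi3 d a b) *
       ((1 - qv ^+ l.+1 * tv ^+ A.+1) / (1 - qv ^+ l.+1 * tv ^+ A.+2))
     else 0)
  else if (a == c) && (b == d) then 1
  else 0.

Definition agree (U V : filling) : bool :=
  [forall j : 'I_n, forall r : 'I_(alpha j).+1, U j r == V j r].

Definition Pi (T U : filling) : Qqt :=
  match [pick h : 'I_(alpha i).+1 | agree U (Omega h T)] with
  | Some h => (\prod_(r < h) rho T r) * (1 - rho T h)
  | None => 0
  end.

End Defs.

(* On adg(alpha), U coincides with Omega_{0,h}(T) for the index h selected by
   P_i(T,U), so it suffices to show that Omega_{0,h}(T) is non-attacking.
   Swapping columns i and i+1 in the rows 0..h maps attacking pairs of boxes
   to attacking pairs, except for two configurations: the pair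
   (i,r),(i+1,r+1) with r < h, whose entries in Omega_{0,h}(T) are b = c at
   row r, and the pair (i,h),(i+1,h+1), whose entries are b = d at row h.
   The first forces rho_r(T) = 0 and the second rho_h(T) = 1, both excluded
   by P_i(T,U) != 0. *)
From HB Require Import structures.
From mathcomp Require Import all_boot all_order all_algebra all_fingroup fraction.
From mathcomp Require Import zify.
Set Implicit Arguments. Unset Strict Implicit. Unset Printing Implicit Defensive.
Import GRing.Theory.
Local Open Scope ring_scope.

Definition non_attacking n (alpha : 'I_n -> nat) (T : filling n) : Prop :=
  forall (j : 'I_n) (r : nat) (j' : 'I_n) (r' : nat),
    in_adg alpha j r -> in_adg alpha j' r' -> (j, r) <> (j', r') ->
    attack j r j' r' -> T j r <> T j' r'.

Lemma attackC n (j : 'I_n) r j' r' : attack j r j' r' = attack j' r' j r.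
Proof. by rewrite /attack eq_sym [X in _ || X]orbC. Qed.

Lemma attack_ltn n (j : 'I_n) r j' r' :
  (r < r')%N -> attack j r j' r' = (r' == r.+1) && (j < j')%N.
Proof.
by move=> hr; rewrite /attack (ltn_eqF hr) (ltn_eqF (ltnW hr : (r < r'.+1)%N)) orbF.
Qed.

Lemma non_attacking_leq n (alpha : 'I_n -> nat) (T : filling n) :
  (forall j r j' r', (r <= r')%N ->
     in_adg alpha j r -> in_adg alpha j' r' -> (j, r) <> (j', r') ->
     attack j r j' r' -> T j r <> T j' r') ->
  non_attacking alpha T.
Proof.
move=> HT j r j' r' hj hj' hne hat; case: (leqP r r') => [hle|/ltnW hle].
  exact: HT.
by apply: nesym; apply: HT; rewrite 1?attackC //; exact: nesym.
Qed.

Lemma agreeP n (alpha : 'I_n -> nat) (U V : filling n) :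
  agree alpha U V -> forall j r, in_adg alpha j r -> U j r = V j r.
Proof.
move=> /forallP HUV j r hr.
by have /forallP/(_ (Ordinal (n := (alpha j).+1) hr))/eqP := HUV j.
Qed.

Lemma non_attacking_agree n (alpha : 'I_n -> nat) (U V : filling n) :
  agree alpha U V -> non_attacking alpha V -> non_attacking alpha U.
Proof.
move=> HUV HV j r j' r' hj hj' hne hat.
by rewrite !(agreeP HUV) //; exact: HV.
Qed.

Lemma Pi_neq0 n (alpha : 'I_n -> nat) (i : 'I_n) (T U : filling n) :
  Pi alpha i T U != 0 ->
  exists h : 'I_(alpha i).+1,
    [/\ agree alpha U (Omega i h T),
        forall r, (r < h)%N -> rho alpha i T r != 0
      & rho alpha i T h != 1].
Proof.
rewrite /Pi; case: pickP => [h HUh|_]; last by rewrite eqxx.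
rewrite mulf_eq0 negb_or subr_eq0 => /andP[/prodf_neq0 Hlow]; rewrite eq_sym => Hhigh.
exists h; split=> [|r hr|]; [exact: HUh | exact: Hlow (Ordinal hr) isT | exact: Hhigh].
Qed.

Lemma Omega_tperm n (i : 'I_n) h (T : filling n) j r :
  Omega i h T j r = if (r <= h)%N then T (tperm i (i1 i) j) r else T j r.
Proof.
rewrite /Omega; case: ifP => // _.
case: tpermP => [->|->|/eqP/negbTE-> /eqP/negbTE->]; rewrite ?eqxx //.
by case: eqP => [->|].
Qed.

Section AdjacentColumns.
Variables (n : nat) (i : 'I_n).
Hypothesis Hn : (i.+1 < n)%N.

Lemma val_i1 : val (i1 i) = i.+1.
Proof. by rewrite /= modn_small. Qed.

Lemma i_lt_i1 : (i < i1 i)%N.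
Proof. by rewrite val_i1. Qed.

Lemma val_tperm_i1 (j : 'I_n) :
  val (tperm i (i1 i) j) =
    if val j == val i then i.+1 else if val j == i.+1 then val i else val j.
Proof.
case: tpermP => [->|->|Hi Hi1]; first by rewrite val_i1 eqxx.
  by rewrite val_i1 eqxx gtn_eqF.
case: (val j =P val i) => [/val_inj //|_]; case: (val j =P i.+1) => [E|//].
by case: Hi1; apply: val_inj; rewrite val_i1.
Qed.

Lemma tperm_i1_ltn (j j' : 'I_n) :
  (j < j')%N -> ~~ (tperm i (i1 i) j < tperm i (i1 i) j')%N ->
  j = i /\ j' = i1 i.
Proof.
rewrite -leqNgt !val_tperm_i1 => hjj' hs.
suff [E E'] : val j = val i /\ val j' = i.+1 by split; apply: val_inj; rewrite ?val_i1.
by move: hs; repeat case: eqP => ? /=; simpl in *; lia.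
Qed.

Lemma tperm_i1_ltn_l (j j' : 'I_n) :
  (j < j')%N -> ~~ (tperm i (i1 i) j < j')%N -> j = i /\ j' = i1 i.
Proof.
rewrite -leqNgt val_tperm_i1 => hjj' hs.
suff [E E'] : val j = val i /\ val j' = i.+1 by split; apply: val_inj; rewrite ?val_i1.
by move: hs; repeat case: eqP => ? /=; simpl in *; lia.
Qed.

Variable alpha : 'I_n -> nat.
Hypothesis Ha : alpha i = alpha (i1 i).

Lemma in_adg_tperm_i1 j r : in_adg alpha (tperm i (i1 i) j) r = in_adg alpha j r.
Proof. by rewrite /in_adg; case: tpermP => [->|->|] //; rewrite Ha. Qed.

Variable T : filling n.
Hypothesis HT : non_attacking alpha T.

Lemma entries_i_i1_neq r : (r < alpha i)%N ->
  [/\ T i r != T (i1 i) r, T i r.+1 != T (i1 i) r.+1 & T i r != T (i1 i) r.+1].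
Proof.
move=> hr; have hne : i <> i1 i by move=> E; move: i_lt_i1; rewrite -E ltnn.
by split; apply/eqP; apply: HT; rewrite /in_adg -?Ha ?(ltnW hr) //;
  try (by case); rewrite /attack ?eqxx ?i_lt_i1 ?orbT.
Qed.

Lemma rho_b_eq_c r : (r < alpha i)%N -> T (i1 i) r = T i r.+1 -> rho alpha i T r = 0.
Proof.
move=> hr E; have [hab hcd had] := entries_i_i1_neq hr.
rewrite /rho leqNgt hr /= -E; move: hab hcd had; rewrite -E.
set a := T i r; set b := T (i1 i) r; set d := T (i1 i) r.+1 => hab hbd had.
by rewrite /= !inE !eqxx /= (negbTE hab) (negbTE hbd) (negbTE had).
Qed.

Lemma rho_b_eq_d r : (r < alpha i)%N -> T (i1 i) r = T (i1 i) r.+1 -> rho alpha i T r = 1.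
Proof.
move=> hr E; have [hab hcb _] := entries_i_i1_neq hr.
rewrite /rho leqNgt hr /= -E; move: hab hcb; rewrite -E.
set a := T i r; set b := T (i1 i) r; set c := T i r.+1 => hab hcb.
have [hba hbc] : b != a /\ b != c by rewrite !(eq_sym b).
case: (eqVneq a c) => [<-|hac].
  by rewrite /= !inE !eqxx ?(negbTE hab, negbTE hba) /=.
have hca : c != a by rewrite eq_sym.
by rewrite /= !inE !eqxx
  ?(negbTE hab, negbTE hba, negbTE hac, negbTE hca, negbTE hbc, negbTE hcb) /=.
Qed.

Variable h : nat.
Hypothesis Hh : (h <= alpha i)%N.
Hypothesis Hlow : forall r, (r < h)%N -> rho alpha i T r != 0.
Hypothesis Hhigh : rho alpha i T h != 1.

Lemma swapped_rows_entries_neq j r j' r' : (r <= r' <= h)%N ->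
  in_adg alpha j r -> in_adg alpha j' r' -> (j, r) <> (j', r') ->
  attack j r j' r' -> T (tperm i (i1 i) j) r <> T (tperm i (i1 i) j') r'.
Proof.
move=> /andP[hle hr'h] hj hj' hne hat.
case Hat: (attack (tperm i (i1 i) j) r (tperm i (i1 i) j') r').
  apply: HT; rewrite ?in_adg_tperm_i1 // => -[/perm_inj Ej Er].
  by apply: hne; rewrite Ej Er.
move: hat Hat; case: (ltngtP r r') hle => // [hrr' _|-> _]; last by rewrite /attack eqxx.
rewrite !attack_ltn // => /andP[/eqP Er hjj] /negbT.
rewrite Er eqxx /= => /(tperm_i1_ltn hjj) [-> ->].
have hrh : (r < h)%N by rewrite -Er.
rewrite tpermL tpermR => E; move: (Hlow hrh).
by rewrite rho_b_eq_c ?eqxx // (leq_trans hrh Hh).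
Qed.

Lemma boundary_row_entries_neq j r j' r' : (r <= h < r')%N ->
  in_adg alpha j r -> in_adg alpha j' r' ->
  attack j r j' r' -> T (tperm i (i1 i) j) r <> T j' r'.
Proof.
move=> /andP[hrh hhr'] hj hj' hat.
move: hat; rewrite attack_ltn ?(leq_ltn_trans hrh hhr') // => /andP[/eqP Er' hjj].
subst r'; have Erh : r = h by lia.
subst r; case: (ltnP (tperm i (i1 i) j) j') => hs.
  apply: HT; rewrite ?in_adg_tperm_i1 //; first by case=> _ /n_Sn.
  by rewrite /attack eqxx hs orbT.
have [Ej Ej'] := tperm_i1_ltn_l hjj (negbT (leq_gtF hs)); subst j j'.
move: hj'; rewrite tpermL /in_adg -Ha => hh E; move: Hhigh.
by rewrite rho_b_eq_d ?eqxx.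
Qed.

Lemma non_attacking_Omega : non_attacking alpha (Omega i h T).
Proof.
apply: non_attacking_leq => j r j' r' hle hj hj' hne hat; rewrite !Omega_tperm.
case: (leqP r' h) => hr'h.
  by rewrite (leq_trans hle hr'h); apply: swapped_rows_entries_neq; rewrite // hle.
case: (leqP r h) => hrh; last exact: HT.
by apply: boundary_row_entries_neq; rewrite // hrh.
Qed.

End AdjacentColumns.

Theorem proposition3p6 (n : nat) (alpha : 'I_n -> nat) (sigma : 'S_n) (i : 'I_n) :
  (i.+1 < n)%N ->
  alpha i = alpha (i1 i) ->
  forall T U : filling n,
    NAF alpha sigma T ->
    is_filling (sigma_si i sigma) U ->
    Pi alpha i T U != 0 ->
    NAF alpha (sigma_si i sigma) U.
Proof.
move=> Hn Ha T U [_ HT] HU /Pi_neq0 [h [HUh Hlow Hhigh]]; split=> //.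
exact: non_attacking_agree HUh (non_attacking_Omega Hn Ha HT (ltn_ord h) Hlow Hhigh).
Qed.
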